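(* For $n,s\in\mathbb{N}$, $$\overline{H}_n(s)=\sum_{k=1}^n(-1)^{k-1}\binom{n}{k}\,{}_{s+1}F_s\left(\{\tfrac12\}^{s},1-k;\{\tfrac32\}^{s};1\right).$$
   Context: $\mathbb{N}$ is the set of positive integers; $\overline{H}_n(s)=\sum_{k=0}^{n-1}\frac{1}{(2k+1)^s}$; $\{a\}^s$ denotes $a$ repeated $s$ times. ${}_{s+1}F_s(a_1,\ldots,a_{s+1};b_1,\ldots,b_s;x)=\sum_{i\geq 0}\frac{(a_1)_i\cdots(a_{s+1})_i}{(b_1)_i\cdots(b_s)_i}\frac{x^i}{i!}$, with $(a)_0=1$, $(a)_i=a(a+1)\cdots(a+i-1)$ for $i>0$ (a finite sum here since $1-k\leq 0$ is an integer). *)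

From mathcomp Require Import all_boot all_order all_algebra.
Set Implicit Arguments. Unset Strict Implicit. Unset Printing Implicit Defensive.
Import Order.TTheory GRing.Theory Num.Theory.
Local Open Scope ring_scope.

Definition poch (R : pzRingType) (a : R) (i : nat) : R :=
  \prod_(j < i) (a + j%:R).

Definition Hbar (n s : nat) : rat :=
  \sum_(k < n) ((2 * k + 1)%:R ^+ s)^-1.

Definition hyperF_trunc (N : nat) (as_ bs : seq rat) (x : rat) : rat :=
  \sum_(i < N)
    (\prod_(a <- as_) poch a i) / (\prod_(b <- bs) poch b i)
      * x ^+ i / (i`!)%:R.

(* s+1 F s ({1/2}^s, 1-k ; {3/2}^s ; 1).  Since 1-k <= 0 is an integer, all
   terms with index i >= k vanish ((1-k)_i = 0), so the full series equals the
   partial sum over i < k. *)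
Definition F_half (s k : nat) : rat :=
  hyperF_trunc k (rcons (nseq s (1/2)) (1 - k%:R)) (nseq s (3/2)) 1.

From mathcomp Require Import all_boot all_order all_algebra.
From mathcomp Require Import ring.
Set Implicit Arguments. Unset Strict Implicit. Unset Printing Implicit Defensive.
Import Order.TTheory GRing.Theory Num.Theory.
Local Open Scope ring_scope.

(* Since (1/2)_i / (3/2)_i = 1/(2i+1) and (1-k)_i / i! = (-1)^i C(k-1,i), the
   k-th hypergeometric value is the binomial transform
   sum_(i<k) (-1)^i C(k-1,i) a_i of a_i = (2i+1)^-s.  Substituting X = 1 - Y in
   the binomial expansion of X^n and cancelling the factor 1 - X gives
   sum_(k=1..n) (-1)^(k-1) C(n,k) (1-X)^(k-1) = sum_(i<n) X^i, and comparing
   coefficients shows that the alternating sum of binomial transforms is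
   sum_(i<n) a_i for every sequence a. *)

Section Pochhammer.
Variable R : comPzRingType.
Implicit Types (a : R) (i k : nat).

Lemma pochSr a i : poch a i.+1 = poch a i * (a + i%:R).
Proof. by rewrite /poch big_ord_recr. Qed.

Lemma pochSl a i : poch a i.+1 = a * poch (a + 1) i.
Proof.
rewrite /poch big_ord_recl addr0; congr (_ * _); apply: eq_bigr => j _.
by rewrite lift0 -nat1r addrA.
Qed.

Lemma poch_opp_nat k i : poch (- k%:R : R) i = (-1) ^+ i * (k ^_ i)%:R.
Proof.
elim: i => [|i IH]; first by rewrite /poch big_ord0 expr0 mul1r.
rewrite pochSr IH ffactnSr exprS natrM.
have [ik | ki] := leqP i k; first by rewrite natrB //; ring.
by rewrite ffact_small // mulr0n !(mulr0, mul0r).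
Qed.

End Pochhammer.

Lemma poch_gt0 (R : numDomainType) (a : R) i : 0 < a -> 0 < poch a i.
Proof.
move=> a_gt0; apply: prodr_gt0 => j _.
by rewrite (lt_le_trans a_gt0) // lerDl ler0n.
Qed.

Lemma poch_shift_ratio (R : numFieldType) (a : R) i :
  0 < a -> poch a i / poch (a + 1) i = a / (a + i%:R).
Proof.
move=> a_gt0; have aS_gt0 : 0 < a + 1 by rewrite addr_gt0.
have aI_gt0 : 0 < a + i%:R by rewrite ltr_wpDr.
apply/eqP; rewrite eqr_div ?(gt_eqF aI_gt0) ?(gt_eqF (poch_gt0 i aS_gt0)) //.
by rewrite -pochSr pochSl mulrC.
Qed.

Lemma poch_half_ratio (R : numFieldType) i :
  poch (1 / 2 : R) i / poch (3 / 2) i = ((2 * i + 1)%:R)^-1.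
Proof.
have -> : 3 / 2 = 1 / 2 + 1 :> R by field.
rewrite poch_shift_ratio ?divr_gt0 // natrD natrM; field.
by rewrite -natrM natr1 pnatr_eq0.
Qed.

Lemma alt_binomial_shift (R : comPzRingType) (y : R) n :
  y * \sum_(k < n) (-1) ^+ k * 'C(n, k.+1)%:R * y ^+ k = 1 - (1 - y) ^+ n.
Proof.
rewrite [1 - y]addrC exprD1n big_ord_recl expr0 bin0 mulr1n opprD addrA subrr add0r.
rewrite mulr_sumr -sumrN; apply: eq_bigr => k _.
rewrite lift0 -[X in _ = - X]mulr_natr exprS [(- y) ^+ _]exprNn; ring.
Qed.

Section AlternatingBinomial.
Variable R : comNzRingType.

Lemma alt_binomial_geom n :
  \sum_(k < n) ((-1) ^+ k * 'C(n, k.+1)%:R) *: (1 - 'X) ^+ k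
  = \sum_(i < n) 'X^i :> {poly R}.
Proof.
have -> : \sum_(k < n) ((-1) ^+ k * 'C(n, k.+1)%:R) *: (1 - 'X) ^+ k =
    \sum_(k < n) (-1) ^+ k * 'C(n, k.+1)%:R * (1 - 'X) ^+ k :> {poly R}.
  by apply: eq_bigr => k _; rewrite -mul_polyC rmorphM rmorph_sign rmorph_nat.
apply: (monic_lreg (monicXsubC (1 : R))).
by rewrite polyC1 -subrX1 -opprB mulNr alt_binomial_shift subKr opprB.
Qed.

Lemma coef_1subX_exp k i :
  ((1 - 'X) ^+ k : {poly R})`_i = (-1) ^+ i * 'C(k, i)%:R.
Proof.
rewrite [1 - _]addrC exprD1n.
under eq_bigr => j _ do
  rewrite exprNn -(rmorph_sign polyC) mul_polyC -scaler_nat scalerA.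
rewrite coef_sumMXn (big_ord1_cond_eq _ (fun j => 'C(k, j)%:R * (-1) ^+ j) xpredT).
by rewrite mulrC; case: ltnP => // ki; rewrite bin_small // mulr0.
Qed.

Lemma coef_sum_Xn n i : (\sum_(j < n) 'X^j : {poly R})`_i = (i < n)%:R.
Proof.
have -> : \sum_(j < n) 'X^j = \poly_(j < n) (1 : R).
  by rewrite poly_def; apply: eq_bigr => j _; rewrite scale1r.
by rewrite coef_poly; case: ltnP.
Qed.

Lemma sum_alt_binomial_transform (a : nat -> R) n :
  \sum_(k < n) (-1) ^+ k * 'C(n, k.+1)%:R *
      \sum_(i < k.+1) (-1) ^+ i * 'C(k, i)%:R * a i
  = \sum_(i < n) a i.
Proof.
have transform_coef (k : 'I_n) :
    \sum_(i < k.+1) (-1) ^+ i * 'C(k, i)%:R * a i =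
    \sum_(i < n) ((1 - 'X) ^+ k : {poly R})`_i * a i.
  rewrite (big_ord_widen n (fun i => (-1) ^+ i * 'C(k, i)%:R * a i)) // big_mkcond.
  apply: eq_bigr => i _; rewrite coef_1subX_exp.
  by case: ltnP => // ki; rewrite bin_small // mulr0 mul0r.
under eq_bigr => k _ do rewrite transform_coef mulr_sumr.
rewrite exchange_big /=; apply: eq_bigr => i _.
under eq_bigr => k _ do rewrite mulrA.
rewrite -mulr_suml.
have := congr1 (fun p : {poly R} => p`_i) (alt_binomial_geom n).
rewrite coef_sum coef_sum_Xn ltn_ord.
under eq_bigr => k _ do rewrite coefZ.
by move->; rewrite mul1r.
Qed.

End AlternatingBinomial.

Lemma F_half_binomial s k :
  F_half s k.+1 = \sum_(i < k.+1) (-1) ^+ i * 'C(k, i)%:R * ((2 * i + 1)%:R ^+ s)^-1.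
Proof.
rewrite /F_half /hyperF_trunc; apply: eq_bigr => i _.
have -> : 1 - k.+1%:R = - k%:R :> rat by rewrite -nat1r opprD addrA subrr add0r.
rewrite big_rcons !big_nseq !iter_mulr_1 expr1n mulr1 poch_opp_nat -bin_ffact natrM.
rewrite -exprVn -poch_half_ratio expr_div_n /=.
field.
by rewrite pnatr_eq0 -lt0n fact_gt0 andbT expf_neq0 // gt_eqF // poch_gt0.
Qed.

Theorem corollary3p2 (n s : nat) (hn : (0 < n)%N) (hs : (0 < s)%N) :
  Hbar n s =
  \sum_(1 <= k < n.+1) (-1) ^+ k.-1 * ('C(n, k))%:R * F_half s k.
Proof.
rewrite big_add1 big_mkord /=.
under eq_bigr => k _ do rewrite F_half_binomial.
by rewrite (sum_alt_binomial_transform (fun i => ((2 * i + 1)%:R ^+ s)^-1)).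
Qed.
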